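(* Let $G=(V=V_0\uplus V_1,v_{\mathsf{init}},E,\gamma)$ be a quantitative graph game, let $\mu>0$ be the maximum of the absolute values of the costs along transitions, and let $d=\frac pq>1$ be the discount factor with $p,q$ positive integers. Under the bit-cost model, for all $(v,w)\in E$ and all $k>0$, the cost of computing $\mathsf{cost}_k(v,w)$ in the $k$-th iteration (given the values $\mathit{wt}_{k-1}$ of the previous iteration) is $O(k\cdot\log p\cdot\max\{\log\mu,\log p\})$.
   Context: A quantitative graph game $G=(V=V_0\uplus V_1, v_{\mathsf{init}},E,\gamma)$ consists of a finite directed graph $(V,E)$ in which every state has at least one outgoing edge, a partition of $V$ into $V_0$ (maximizing player) and $V_1$ (minimizing player), an initial state, and an integer cost function $\gamma:E\to\mathbb{Z}$. Value iteration defines $\mathit{wt}_1(v)=\max\{\gamma(v,w):(v,w)\in E\}$ for $v\in V_0$ ($\min$ for $v\in V_1$) and $\mathit{wt}_{k+1}(v)=\max\{\gamma(v,w)+\frac1d\mathit{wt}_k(w):(v,w)\in E\}$ for $v\in V_0$ ($\min$ for $v\in V_1$). The transition costs are $\mathsf{cost}_1(v,w)=\gamma(v,w)$ and $\mathsf{cost}_k(v,w)=\gamma(v,w)+\frac1d\mathit{wt}_{k-1}(w)$ for $k>1$. In the bit-cost model, integers are represented in binary, a rational $r/s$ by the pair of binary representations of $r$ and $s$, and adding (resp. multiplying) integers of bit-lengths $n$ and $m$ costs $O(n+m)$ (resp. $O(n\cdot m)$). *)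

From mathcomp Require Import all_boot all_order all_algebra.
Set Implicit Arguments. Unset Strict Implicit. Unset Printing Implicit Defensive.
Import Order.TTheory GRing.Theory Num.Theory.
Local Open Scope ring_scope.

(* A game is given by: a finite state type V, the set V0 of maximizer states
   (V1 = ~: V0), an initial state, an edge relation E, and an integer cost
   gamma v w (only relevant for E v w). *)

Definition maxabs (V : finType) (E : rel V) (gamma : V -> V -> int) : nat :=
  (\max_(e : V * V | E e.1 e.2) `|gamma e.1 e.2|)%N.

(* some successor of v (used only as seed of the finite max/min) *)
Definition some_succ (V : finType) (E : rel V) (v : V) : V :=
  odflt v [pick w | E v w].

Definition opt_succ (V : finType) (V0 : {set V}) (E : rel V) (v : V)
    (f : V -> rat) : rat :=
  if v \in V0 then \big[Num.max/f (some_succ E v)]_(w | E v w) f w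
  else \big[Num.min/f (some_succ E v)]_(w | E v w) f w.

(* value iteration wt_k, discount factor d = p/q; wt 0 is unused (set to 0) *)
Fixpoint wt (V : finType) (V0 : {set V}) (E : rel V) (gamma : V -> V -> int)
    (p q : nat) (k : nat) : V -> rat :=
  fun v => match k with
  | 0 => 0
  | k'.+1 => opt_succ V0 E v (fun w =>
       if k' is 0 then (gamma v w)%:~R
       else (gamma v w)%:~R + wt V0 E gamma p q k' w / (p%:R / q%:R))
  end.

Definition costk (V : finType) (V0 : {set V}) (E : rel V) (gamma : V -> V -> int)
    (p q : nat) (k : nat) (v w : V) : rat :=
  if k is k'.+2 then (gamma v w)%:~R + wt V0 E gamma p q k'.+1 w / (p%:R / q%:R)
  else (gamma v w)%:~R.

Definition blen (n : nat) : nat := (trunc_log 2 n).+1.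
Definition zlen (z : int) : nat := blen `|z|%N.
Definition add_cost (a b : int) : nat := (zlen a + zlen b)%N.
Definition mul_cost (a b : int) : nat := (zlen a * zlen b)%N.

(* Computation of cost_k(v,w) = gamma + (q/p) * (r/s) in the k-th iteration,
   given wt_{k-1}(w) = r/s as a rational (r = numq, s = denq):
     a := r*q ; b := s*p ; c := gamma*b ; result := (c + a) / b. *)
Definition step_result (g : int) (p q : nat) (x : rat) : int * int :=
  let r := numq x in let s := denq x in
  let a := r * q%:Z in let b := s * p%:Z in let c := g * b in (c + a, b).

Definition step_cost (g : int) (p q : nat) (x : rat) : nat :=
  let r := numq x in let s := denq x in
  let a := r * q%:Z in let b := s * p%:Z in let c := g * b in
  (mul_cost r q%:Z + mul_cost s p%:Z + mul_cost g b + add_cost c a)%N.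

(* the pair computed at iteration k (k = 1: cost_1 = gamma, read off, cost 0) *)
Definition comp_result (V : finType) (V0 : {set V}) (E : rel V)
    (gamma : V -> V -> int) (p q : nat) (k : nat) (v w : V) : int * int :=
  if k is k'.+2 then step_result (gamma v w) p q (wt V0 E gamma p q k'.+1 w)
  else (gamma v w, 1).

Definition comp_cost (V : finType) (V0 : {set V}) (E : rel V)
    (gamma : V -> V -> int) (p q : nat) (k : nat) (v w : V) : nat :=
  if k is k'.+2 then step_cost (gamma v w) p q (wt V0 E gamma p q k'.+1 w)
  else 0%N.

From mathcomp Require Import all_boot all_order all_algebra zify ring.
Set Implicit Arguments. Unset Strict Implicit.
Import Order.TTheory GRing.Theory Num.Theory.
Local Open Scope ring_scope.

(* By induction on k, p^(k-2) * wt_(k-1)(w) is an integer of absolute value at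
   most mu (k-1) p^(k-2).  Reducing the fraction can only shrink numerator and
   denominator, so the numerator of wt_(k-1)(w) has O(log mu + k + k log p)
   bits and its denominator O(k log p) bits.  Each of the four arithmetic
   operations then costs O(k log p max(log mu, log p)) in the bit-cost model. *)

Lemma blen_ltn (n : nat) : (n < 2 ^ blen n)%N.
Proof. exact: trunc_log_ltn. Qed.

Lemma blen_leq (n t : nat) : (0 < t)%N -> (n < 2 ^ t)%N -> (blen n <= t)%N.
Proof.
move=> t_gt0 n_lt; rewrite /blen; case: n n_lt => [|n] n_lt.
  by rewrite trunc_log0.
have := leq_ltn_trans (trunc_logP (isT : (1 < 2)%N) (ltn0Sn n)) n_lt.
by rewrite ltn_exp2l.
Qed.

Lemma leq_blen [m n : nat] : (m <= n)%N -> (blen m <= blen n)%N.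
Proof. by move=> le_mn; rewrite /blen ltnS leq_trunc_log. Qed.

Lemma blen_mul (m n : nat) : (blen (m * n) <= blen m + blen n)%N.
Proof.
apply: blen_leq; first by rewrite addn_gt0.
by rewrite expnD ltn_mul // blen_ltn.
Qed.

Lemma blen_expn (m e : nat) : (blen (m ^ e) <= e * blen m + 1)%N.
Proof.
apply: blen_leq; first by rewrite addn1.
apply: (@leq_ltn_trans (2 ^ (e * blen m))); last by rewrite ltn_exp2l // addn1.
rewrite mulnC expnM; case: e => [|e]; first by rewrite !expn0.
by rewrite leq_exp2r // ltnW // blen_ltn.
Qed.

Lemma blen_leq_self (n : nat) : (0 < n)%N -> (blen n <= n)%N.
Proof. by move=> n_gt0; apply: blen_leq => //; apply: ltn_expl. Qed.

Lemma frac_num_den_le (x : rat) (N : int) (D : nat) : (0 < D)%N ->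
  x = N%:~R / D%:R -> (`|denq x| <= D)%N /\ (`|numq x| <= `|N|)%N.
Proof.
move=> D_gt0 x_frac.
have cross : numq x * D%:Z = N * denq x.
  apply: (@intr_inj rat); rewrite !rmorphM /= numqE x_frac pmulrn.
  have D_neq0 : (D%:R : rat) != 0 by rewrite pnatr_eq0 -lt0n.
  by field.
have abs_cross : (`|numq x| * D = `|N| * `|denq x|)%N.
  by have := congr1 absz cross; rewrite !abszM.
have den_dvd : (`|denq x| %| D)%N.
  have := coprime_num_den x; rewrite coprime_sym => cop.
  by rewrite -(Gauss_dvdr _ cop) abs_cross dvdn_mull.
have den_le : (`|denq x| <= D)%N by exact: dvdn_leq.
split => //.
by rewrite -(leq_pmul2r D_gt0) abs_cross leq_mul2l den_le orbT.
Qed.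

Lemma step_resultE (g : int) (p q : nat) (x : rat) : (0 < p)%N -> (0 < q)%N ->
  (step_result g p q x).2 != 0 /\
  (step_result g p q x).1%:~R / (step_result g p q x).2%:~R
    = g%:~R + x / (p%:R / q%:R) :> rat.
Proof.
move=> p_gt0 q_gt0; rewrite /step_result /=.
split; first by rewrite mulf_neq0 ?denq_neq0 // -lt0n.
have p_neq0 : (p%:R : rat) != 0 by rewrite pnatr_eq0 -lt0n.
have q_neq0 : (q%:R : rat) != 0 by rewrite pnatr_eq0 -lt0n.
have s_neq0 : ((denq x)%:~R : rat) != 0 by rewrite intr_eq0 denq_neq0.
rewrite -[x in RHS]divq_num_den rmorphD !rmorphM /= -!pmulrn.
by field; rewrite s_neq0 p_neq0 q_neq0.
Qed.

Lemma step_cost_le (g : int) (p q mu j : nat) (x : rat) :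
  (1 < p)%N -> (q <= p)%N -> (`|g| <= mu)%N ->
  (`|denq x| <= p ^ j)%N -> (`|numq x| <= mu * j.+1 * p ^ j)%N ->
  (step_cost g p q x
     <= 40 * j.+2 * trunc_log 2 p * maxn (trunc_log 2 mu) (trunc_log 2 p))%N.
Proof.
move=> p_gt1 q_le_p g_le den_le num_le.
rewrite /step_cost /mul_cost /add_cost /zlen !abszM !absz_nat.
set L := trunc_log 2 p; set A := trunc_log 2 mu.
have L_gt0 : (0 < L)%N by rewrite trunc_log_gt0 p_gt1 /=; lia.
have blen_p : blen p = L.+1 by [].
have blen_g : (blen `|g| <= A.+1)%N by exact: leq_blen.
have blen_q : (blen q <= L.+1)%N by rewrite -blen_p leq_blen.
have blen_den : (blen `|denq x| <= j * L.+1 + 1)%N.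
  by rewrite -blen_p; apply: leq_trans (leq_blen den_le) (blen_expn _ _).
have blen_num : (blen `|numq x| <= A.+1 + j.+1 + (j * L.+1 + 1))%N.
  apply: leq_trans (leq_blen num_le) _; rewrite -blen_p.
  apply: leq_trans (blen_mul _ _) _; apply: leq_add (blen_expn _ _).
  apply: leq_trans (blen_mul _ _) _.
  apply: leq_add; first exact: leqnn. exact: blen_leq_self.
have blen_den_p : (blen (`|denq x| * p) <= j * L.+1 + 1 + L.+1)%N.
  by apply: leq_trans (blen_mul _ _) _; rewrite leq_add2r.
have blen_g_den_p := leq_trans (blen_mul `|g| _) (leq_add blen_g blen_den_p).
have blen_num_q := leq_trans (blen_mul `|numq x| q) (leq_add blen_num blen_q).
rewrite blen_p; apply: leq_trans (leq_add (leq_add (leq_add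
  (leq_mul blen_num blen_q) (leq_mul blen_den (leqnn _)))
  (leq_mul blen_g blen_den_p)) (leq_add blen_g_den_p blen_num_q)) _.
have := leq_maxl A L; have := leq_maxr A L.
move: (maxn A L) => M; clearbody L A; clear - L_gt0; nia.
Qed.

Section ValueIteration.

Variables (V : finType) (V0 : {set V}) (E : rel V) (gamma : V -> V -> int).
Variables (p q : nat).
Hypothesis E_total : forall v, exists w, E v w.
Hypotheses (q_gt0 : (0 < q)%N) (q_le_p : (q <= p)%N).

Lemma opt_succ_attained (v : V) (f : V -> rat) :
  exists2 w, E v w & opt_succ V0 E v f = f w.
Proof.
have succ_v : E v (some_succ E v).
  have [w vw] := E_total v; rewrite /some_succ.
  by case: pickP => [//|no_succ]; move: (no_succ w); rewrite vw.
pose attained x := exists2 w, E v w & x = f w.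
have f_attained w : E v w -> attained (f w) by exists w.
have seed_attained := f_attained _ succ_v.
rewrite /opt_succ; case: ifP => _; apply: (big_ind attained) => //.
- by move=> x y ax ay; rewrite /Num.max; case: ifP.
- by move=> x y ax ay; rewrite /Num.min; case: ifP.
Qed.

Lemma maxabs_ge [v w : V] : E v w -> (`|gamma v w| <= maxabs E gamma)%N.
Proof.
by move=> vw; apply: (@leq_bigmax_cond _ (fun e : V * V => E e.1 e.2)
  (fun e => `|gamma e.1 e.2|%N) (v, w)).
Qed.

Lemma wt_numerator (j : nat) (w : V) : exists N : int,
  wt V0 E gamma p q j.+1 w = N%:~R / (p ^ j)%:R /\
  (`|N| <= maxabs E gamma * j.+1 * p ^ j)%N.
Proof.
elim: j w => [|j IH] w /=.
  have [w' ww' ->] := opt_succ_attained w (fun w' => (gamma w w')%:~R).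
  by exists (gamma w w'); rewrite divr1 !muln1 maxabs_ge.
have [w' ww' ->] := opt_succ_attained w (fun w' =>
  (gamma w w')%:~R + wt V0 E gamma p q j.+1 w' / (p%:R / q%:R)).
have [N [wt_w' N_le]] := IH w'.
exists (gamma w w' * (p ^ j.+1)%:Z + N * q%:Z); split.
  have p_neq0 : (p%:R : rat) != 0 by rewrite pnatr_eq0 -lt0n (leq_trans q_gt0).
  have q_neq0 : (q%:R : rat) != 0 by rewrite pnatr_eq0 -lt0n.
  have pj_neq0 : (p%:R : rat) ^+ j != 0 by rewrite expf_neq0.
  rewrite wt_w' rmorphD !rmorphM /= -!pmulrn !natrX exprS.
  by field; rewrite p_neq0 q_neq0 pj_neq0.
have g_le := maxabs_ge ww'.
move: (maxabs E gamma) g_le N_le => mu g_le N_le.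
have := leq_mul g_le (leqnn (p ^ j.+1)); have := leq_mul N_le q_le_p.
rewrite expnS; nia.
Qed.

End ValueIteration.

Theorem lemma5 : exists C : nat,
  forall (V : finType) (V0 : {set V}) (vinit : V) (E : rel V)
         (gamma : V -> V -> int) (p q : nat),
  (forall v : V, exists w : V, E v w) ->
  (0 < maxabs E gamma)%N ->
  (0 < q)%N -> (q < p)%N ->
  forall (k : nat) (v w : V), (0 < k)%N -> E v w ->
    ((comp_result V0 E gamma p q k v w).2 != 0 /\
     (comp_result V0 E gamma p q k v w).1%:~R
       / (comp_result V0 E gamma p q k v w).2%:~R
       = costk V0 E gamma p q k v w :> rat) /\
    (comp_cost V0 E gamma p q k v w
       <= C * k * trunc_log 2 p * maxn (trunc_log 2 (maxabs E gamma)) (trunc_log 2 p))%N.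
Proof.
exists 40%N => V V0 _ E gamma p q E_total _ q_gt0 q_lt_p [//|[|j]] v w _ vw.
  by rewrite /= divr1.
have p_gt1 : (1 < p)%N by exact: leq_ltn_trans q_gt0 q_lt_p.
split; first exact: step_resultE _ _ (ltnW p_gt1) q_gt0.
have [N [wt_w N_le]] := wt_numerator V0 gamma E_total q_gt0 (ltnW q_lt_p) j w.
have pj_gt0 : (0 < p ^ j)%N by rewrite expn_gt0 ltnW.
have [den_le num_le] := frac_num_den_le pj_gt0 wt_w.
exact: step_cost_le p_gt1 (ltnW q_lt_p) (maxabs_ge gamma vw) den_le
  (leq_trans num_le N_le).
Qed.
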